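(* Let $(B,k)$ be an instance of the orthogonal buttons and scissors problem. If $B$ contains more than $k^2$ light buttons, then $(B,k)$ is a no-instance.
   Context: An instance of the orthogonal buttons and scissors problem is a pair $(B,k)$ where $B$ is an $n\times m$ matrix with nonnegative integer entries and $k$ is a nonnegative integer. Cell $(i,j)$ contains a button of color $c$ if $B[i,j]=c>0$, and no button if $B[i,j]=0$. A cut is either a horizontal cut (a sequence of consecutive cells in one row) or a vertical cut (a sequence of consecutive cells in one column). Cuts are applied one after another; a cut is valid at the moment it is applied if, among the buttons still present, its first and last cells contain buttons and all buttons in its cells have the same color. Applying a cut deletes all buttons in its cells. $(B,k)$ is a yes-instance if some sequence of at most $k$ cuts, each valid when applied, removes all buttons of $B$, and a no-instance otherwise. A row or column of $B$ is heavy if it contains at least $k+1$ buttons and light otherwise. A button is heavy if it lies in some heavy row or heavy column, and light otherwise. *)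

From mathcomp Require Import all_boot all_algebra.
Set Implicit Arguments. Unset Strict Implicit. Unset Printing Implicit Defensive.

Definition cell (n m : nat) := ('I_n * 'I_m)%type.

(* A cut: horizontal in row i from column a to column b,
   or vertical in column j from row a to row b.  The cells of the cut
   are the consecutive cells between its first cell and its last cell. *)
Inductive cut (n m : nat) :=
| HCut of 'I_n & 'I_m & 'I_m
| VCut of 'I_m & 'I_n & 'I_n.

Section BS.
Variables (n m : nat).

Definition cut_cells (c : cut n m) : {set cell n m} :=
  match c with
  | HCut i a b => [set x : cell n m | (x.1 == i) && (a <= x.2 <= b)]
  | VCut j a b => [set x : cell n m | (x.2 == j) && (a <= x.1 <= b)]
  end.

Definition cut_first (c : cut n m) : cell n m :=
  match c with HCut i a _ => (i, a) | VCut j a _ => (a, j) end.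
Definition cut_last (c : cut n m) : cell n m :=
  match c with HCut i _ b => (i, b) | VCut j _ b => (b, j) end.
Definition cut_wf (c : cut n m) : bool :=
  match c with HCut _ a b => a <= b | VCut _ a b => a <= b end.

Variable B : 'M[nat]_(n, m).

Definition color (x : cell n m) : nat := B x.1 x.2.

Definition buttons : {set cell n m} := [set x | 0 < color x].

Definition valid_cut (S : {set cell n m}) (c : cut n m) : bool :=
  [&& cut_wf c, cut_first c \in S, cut_last c \in S &
      [forall x in cut_cells c :&: S, forall y in cut_cells c :&: S,
         color x == color y]].

Definition apply_cut (S : {set cell n m}) (c : cut n m) : {set cell n m} :=
  S :\: cut_cells c.

Fixpoint run (S : {set cell n m}) (s : seq (cut n m)) : option {set cell n m} :=
  match s with
  | [::] => Some S
  | c :: s' => if valid_cut S c then run (apply_cut S c) s' else None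
  end.

Definition yes_instance (k : nat) : Prop :=
  exists s : seq (cut n m), size s <= k /\ run buttons s = Some set0.

Definition row_count (i : 'I_n) : nat := #|[set j : 'I_m | 0 < B i j]|.
Definition col_count (j : 'I_m) : nat := #|[set i : 'I_n | 0 < B i j]|.

Definition heavy_row (k : nat) (i : 'I_n) : bool := k.+1 <= row_count i.
Definition heavy_col (k : nat) (j : 'I_m) : bool := k.+1 <= col_count j.

Definition light_buttons (k : nat) : {set cell n m} :=
  [set x in buttons | ~~ heavy_row k x.1 && ~~ heavy_col k x.2].

End BS.

From mathcomp Require Import all_boot all_algebra.
Set Implicit Arguments. Unset Strict Implicit. Unset Printing Implicit Defensive.

(* A row or column containing a light button is itself light, so it holds at most
   k buttons.  A cut lies in a single row or column, hence removes at most k light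
   buttons, and k cuts remove at most k^2 of them. *)

Section Runs.
Variables (n m : nat) (B : 'M[nat]_(n, m)).

Lemma run_card_le (L S T : {set cell n m}) (s : seq (cut n m)) :
  run B S s = Some T ->
  #|L :&: S| <= #|L :&: T| + \sum_(c <- s) #|L :&: cut_cells c|.
Proof.
elim: s S => [|c s IH] S /=; first by move=> [->]; rewrite big_nil addn0.
case: ifP => // _ /IH run_rest; rewrite big_cons addnCA.
apply: leq_trans (leq_add (leqnn _) run_rest).
rewrite -(cardsID (cut_cells c) (L :&: S)) /apply_cut setIDA leq_add2r.
by apply: subset_leq_card; rewrite setIAC subsetIl.
Qed.

End Runs.

Section LightButtons.
Variables (n m : nat) (B : 'M[nat]_(n, m)) (k : nat).

Lemma card_buttons_row (i : 'I_n) :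
  #|[set x in buttons B | x.1 == i]| = row_count B i.
Proof.
rewrite -(@card_in_imset _ _ snd); last first.
  by move=> [a b] [c d]; rewrite !inE /= => /andP[_ /eqP ->] /andP[_ /eqP ->] ->.
apply: eq_card => j; rewrite inE; apply/imsetP/idP => [[x]|Bij].
  by rewrite !inE => /andP[+ /eqP <-] ->.
by exists (i, j); rewrite // !inE eqxx andbT.
Qed.

Lemma card_buttons_col (j : 'I_m) :
  #|[set x in buttons B | x.2 == j]| = col_count B j.
Proof.
rewrite -(@card_in_imset _ _ fst); last first.
  by move=> [a b] [c d]; rewrite !inE /= => /andP[_ /eqP ->] /andP[_ /eqP ->] ->.
apply: eq_card => i; rewrite inE; apply/imsetP/idP => [[x]|Bij].
  by rewrite !inE => /andP[+ /eqP <-] ->.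
by exists (i, j); rewrite // !inE eqxx andbT.
Qed.

Lemma light_buttons_sub : light_buttons B k \subset buttons B.
Proof. by apply/subsetP => x; rewrite inE => /andP[]. Qed.

Lemma card_light_row (i : 'I_n) :
  #|[set x in light_buttons B k | x.1 == i]| <= k.
Proof.
have [->|[x]] := set_0Vmem [set x in light_buttons B k | x.1 == i].
  by rewrite cards0.
rewrite !inE => /andP[/andP[_ /andP[light_row _]] /eqP <-].
have row_le : row_count B x.1 <= k by rewrite leqNgt.
apply: leq_trans row_le.
rewrite -card_buttons_row; apply: subset_leq_card.
by apply/subsetP => y; rewrite !inE => /andP[/andP[-> _] ->].
Qed.

Lemma card_light_col (j : 'I_m) :
  #|[set x in light_buttons B k | x.2 == j]| <= k.
Proof.
have [->|[x]] := set_0Vmem [set x in light_buttons B k | x.2 == j].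
  by rewrite cards0.
rewrite !inE => /andP[/andP[_ /andP[_ light_col]] /eqP <-].
have col_le : col_count B x.2 <= k by rewrite leqNgt.
apply: leq_trans col_le.
rewrite -card_buttons_col; apply: subset_leq_card.
by apply/subsetP => y; rewrite !inE => /andP[/andP[-> _] ->].
Qed.

Lemma card_light_cut (c : cut n m) : #|light_buttons B k :&: cut_cells c| <= k.
Proof.
case: c => [i a b|j a b].
  apply: leq_trans (card_light_row i); apply: subset_leq_card.
  by apply/subsetP => x; rewrite !inE => /andP[-> /andP[-> _]].
apply: leq_trans (card_light_col j); apply: subset_leq_card.
by apply/subsetP => x; rewrite !inE => /andP[-> /andP[-> _]].
Qed.

End LightButtons.

Theorem mainTheorem3 (n m : nat) (B : 'M[nat]_(n, m)) (k : nat) :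
  k ^ 2 < #|light_buttons B k| -> ~ yes_instance B k.
Proof.
move=> many_light [s [size_s run_s]].
have := run_card_le (light_buttons B k) run_s.
rewrite setI0 cards0 add0n (setIidPl (light_buttons_sub B k)) => card_le.
have sum_le : \sum_(c <- s) #|light_buttons B k :&: cut_cells c| <= k * k.
  apply: leq_trans (_ : \sum_(c <- s) k <= _).
    by apply: leq_sum => c _; apply: card_light_cut.
  by rewrite big_const_seq count_predT iter_addn_0 mulnC leq_mul.
by move: (leq_trans card_le sum_le); rewrite leqNgt mulnn many_light.
Qed.
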